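(* Let $J\subset\mathbb Z$ be a non-empty finite interval and let $n\ge 1$. Let $\tilde\xi_n^{J}$ be the unique polynomial of $\mathbb Q_p[x]$ of degree $<p^n|J|$ such that $\tilde\xi_n^{J}\equiv \xi_n^{(j)}/p \pmod{\omega_n^{(j)}}$ for every $j\in J$. Then $$\tilde\xi_n^{J}=(\ell_n^{J}\bmod \omega_{n-1}^{J})^{-1}\,\ell_n^{J},$$ $\tilde\xi_n^{J}\equiv 0\pmod{\omega_n^{J}/\omega_{n-1}^{J}}$ and $\tilde\xi_n^{J}\equiv 1\pmod{\omega_{n-1}^{J}}$, and $$p^{|J|}\le \|\tilde\xi_n^{J}\|_1\le p^{|J|+\beta(|J|)}.$$ Moreover, if $\beta(|J|)=0$, then $\tilde\xi_n^{J}/\ell_n^{J}$ is a unit of $\mathbb Z_p[[x]]$.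
   Context: Let $p$ be an odd prime and $u\in 1+p\mathbb Z_p$ with $u\neq 1$. For a polynomial $f\in\mathbb Q_p[x]$, $\|f\|_1$ is the maximum of the $p$-adic absolute values of its coefficients. For $f\in\mathbb Q_p[[x]]$ and $j\in\mathbb Z$ put $f^{(j)}(x)=f(u^{-j}(1+x)-1)$. Let $\omega_n=(1+x)^{p^n}-1$ for $n\ge0$, $\xi_n=\omega_n/\omega_{n-1}$ for $n\ge1$ and $\xi_0=px$. For a finite set $S\subset\mathbb Z$ of cardinality $|S|$, put $\omega_n^{S}=\prod_{j\in S}\omega_n^{(j)}$ and $\ell_n^{S}=\prod_{j\in S}\xi_n^{(j)}/p$. If $P,Q$ are coprime polynomials, $(P\bmod Q)^{-1}$ denotes the unique polynomial $R$ of degree $<\deg Q$ with $RP\equiv1\pmod Q$. Put $\beta(s)=\mathrm{ord}_p((s-1)!)$. *)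

From HB Require Import structures.
From mathcomp Require Import all_boot all_order all_algebra.
From mathcomp Require Import reals.
Set Implicit Arguments. Unset Strict Implicit. Unset Printing Implicit Defensive.
Import Order.TTheory GRing.Theory Num.Theory.
Local Open Scope ring_scope.

(* K with absolute value abs : K -> R is "Q_p" iff abs is a non-archimedean
   absolute value normalised by |p| = 1/p, K is complete for it, and Q is
   dense in K (i.e. K is the completion of Q for the p-adic absolute value). *)
Definition cauchy_seq (K : fieldType) (R : realType) (abs : K -> R)
  (s : nat -> K) : Prop :=
  forall eps : R, 0 < eps -> exists M : nat,
    forall m k : nat, (M <= m)%N -> (M <= k)%N -> abs (s m - s k) < eps.

Definition converges_to (K : fieldType) (R : realType) (abs : K -> R)
  (s : nat -> K) (l : K) : Prop :=
  forall eps : R, 0 < eps -> exists M : nat,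
    forall m : nat, (M <= m)%N -> abs (s m - l) < eps.

Definition is_Qp (p : nat) (K : fieldType) (R : realType) (abs : K -> R) : Prop :=
  [/\ (forall x : K, abs x = 0 <-> x = 0),
      (forall x : K, 0 <= abs x),
      (forall x y : K, abs (x * y) = abs x * abs y),
      (forall x y : K, abs (x + y) <= Num.max (abs x) (abs y))
    & [/\ abs (p%:R) = (p%:R)^-1,
      (forall s : nat -> K, cauchy_seq abs s -> exists l, converges_to abs s l)
    & (forall (x : K) (eps : R), 0 < eps ->
         exists q : rat, abs (x - ratr q) < eps)]].

Definition twist (K : fieldType) (u : K) (j : int) (f : {poly K}) : {poly K} :=
  f \Po ((u ^ (- j))%:P * ('X + 1) - 1).

Definition omega (K : fieldType) (p n : nat) : {poly K} :=
  ('X + 1) ^+ (p ^ n) - 1.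

Definition xi (K : fieldType) (p n : nat) : {poly K} :=
  if n is m.+1 then omega K p n %/ omega K p m else p%:R *: 'X.

Definition omegaS (K : fieldType) (p : nat) (u : K) (n : nat) (S : seq int)
  : {poly K} := \prod_(j <- S) twist u j (omega K p n).

Definition ellS (K : fieldType) (p : nat) (u : K) (n : nat) (S : seq int)
  : {poly K} := \prod_(j <- S) ((p%:R)^-1 *: twist u j (xi K p n)).

Definition Zinterval (a : int) (N : nat) : seq int :=
  [seq a + (k%:Z) | k <- iota 0 N].

(* R = (P mod Q)^{-1}: deg R < deg Q and R P = 1 mod Q *)
Definition is_inv_mod (K : fieldType) (P Q Rp : {poly K}) : Prop :=
  (size Rp < size Q)%N /\ Q %| (Rp * P - 1).

Definition norm1 (K : fieldType) (R : realType) (abs : K -> R) (f : {poly K}) : R :=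
  \big[Num.max/0]_(i < size f) abs f`_i.

Definition beta (p s : nat) : nat := logn p (s.-1)`!.

Definition ps_of_poly (K : fieldType) (f : {poly K}) : nat -> K := fun k => f`_k.

Definition psmul (K : fieldType) (a b : nat -> K) : nat -> K :=
  fun k => \sum_(i < k.+1) a i * b (k - i)%N.

Definition ps_one (K : fieldType) : nat -> K := fun k => if k == 0%N then 1 else 0.

(* coefficients in Z_p = {x | |x| <= 1} *)
Definition ps_integral (K : fieldType) (R : realType) (abs : K -> R)
  (a : nat -> K) : Prop := forall k, abs (a k) <= 1.

Definition ps_Zp_unit (K : fieldType) (R : realType) (abs : K -> R)
  (a : nat -> K) : Prop :=
  ps_integral abs a /\
  exists b : nat -> K, ps_integral abs b /\ psmul a b = ps_one K.

(* Put [q = p^(n-1)] and [Y_j = (u^-j (1+x))^q], so that [omega_n^(j) = Y_j^p - 1],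
   [omega_(n-1)^(j) = Y_j - 1] and [xi_n^(j) = sum_(i<p) Y_j^i].  Modulo [omega_n^(j)]
   the power [(1+x)^(p^n)] is a constant [x_j], hence the interpolant is
   [sum_(i<p) (1+x)^(q i) T_i((1+x)^(p^n))], where [T_i] of degree [< |J|] interpolates
   geometric values at the geometric nodes [x_j].  Newton's divided differences of such
   data are explicit products, and [|w^k - 1| = |k| |w - 1|] for [|w - 1| <= 1/p] makes their
   absolute values [p^(m+1) prod_(l<m) |i + p l| / |l + 1|]: all are at most
   [p^(|J| + beta(|J|))], and for [i = p - 1] (where [p] never divides [i + p l]) the top
   one, which is a coefficient of the interpolant, is at least [p^|J|].  The
   divisibilities are the Chinese remainder theorem for the pairwise coprime
   [omega_n^(j)].  If [beta(|J|) = 0], the cofactor [t / ell] has integral coefficients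
   (division by the integral, unit-leading [prod xi_n^(j)]) and takes a unit value at
   the root [u^a - 1] of [omega_(n-1)^(a)], so its constant term is a unit. *)

From HB Require Import structures.
From mathcomp Require Import all_boot all_order all_algebra.
From mathcomp Require Import reals.
From mathcomp Require Import ring zify.
Set Implicit Arguments. Unset Strict Implicit. Unset Printing Implicit Defensive.
Import Order.TTheory GRing.Theory Num.Theory.
Local Open Scope ring_scope.

Section PolyFacts.
Variable R : idomainType.
Implicit Types (d f g : {poly R}).

Lemma size_leq_coefn0 f m : (size f <= m.+1)%N -> f`_m = 0 -> (size f <= m)%N.
Proof.
rewrite leq_eqVlt => /orP [/eqP sf fm|//].
have : lead_coef f = 0 by rewrite lead_coefE sf.
by move/eqP; rewrite lead_coef_eq0 => /eqP ->; rewrite size_poly0.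
Qed.

Lemma dvdp_sum (I : Type) (r : seq I) (P : pred I) (F : I -> {poly R}) d :
  (forall i, P i -> d %| F i) -> d %| \sum_(i <- r | P i) F i.
Proof.
move=> dF; elim/big_rec: _ => [|i g Pi dg]; first exact: dvdp0.
by rewrite dvdp_add ?dF.
Qed.

Lemma coprimep_prodr (I : eqType) (r : seq I) (F : I -> {poly R}) f :
  (forall i, i \in r -> coprimep f (F i)) -> coprimep f (\prod_(i <- r) F i).
Proof.
elim: r => [|i r IHr] cop; first by rewrite big_nil coprimep1.
rewrite big_cons coprimepMr cop ?mem_head //= IHr // => j jr.
by rewrite cop // in_cons jr orbT.
Qed.

Lemma dvdp_prod_coprime (I : eqType) (r : seq I) (F : I -> {poly R}) g : uniq r ->
  {in r &, forall i j, i != j -> coprimep (F i) (F j)} ->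
  (forall i, i \in r -> F i %| g) -> \prod_(i <- r) F i %| g.
Proof.
elim: r => [|i r IHr] /= => [_ _ _|/andP [ir ur] cop dvdg]; first by rewrite big_nil dvd1p.
have sub_r j : j \in r -> j \in i :: r by rewrite in_cons => ->; rewrite orbT.
rewrite big_cons Gauss_dvdp ?dvdg ?mem_head ?IHr //=.
- by move=> j k jr kr; apply: cop; rewrite sub_r.
- by move=> j jr; rewrite dvdg ?sub_r.
apply: coprimep_prodr => j jr; rewrite cop ?mem_head ?sub_r //.
by apply: contraNneq ir => ->.
Qed.

Lemma eq_poly_coprime_mod (I : eqType) (r : seq I) (F : I -> {poly R}) f g : uniq r ->
  {in r &, forall i j, i != j -> coprimep (F i) (F j)} ->
  (forall i, i \in r -> F i %| f - g) ->
  (size (f - g)%R < size (\prod_(i <- r) F i)%R)%N -> f = g.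
Proof.
move=> ur cop dvd_fg; apply: contraTeq; rewrite -subr_eq0 -leqNgt => fg0.
exact/dvdp_leq/dvdp_prod_coprime.
Qed.

Lemma size_prod_uniform (I : Type) (r : seq I) (F : I -> {poly R}) m :
  (forall i, size (F i) = m.+1) -> size (\prod_(i <- r) F i) = (size r * m).+1.
Proof.
move=> sF; elim: r => [|i r IHr]; first by rewrite big_nil size_poly1.
rewrite big_cons size_mul ?IHr ?sF -?size_poly_eq0 ?IHr ?sF //=.
by rewrite mulSn; lia.
Qed.

Lemma size_XaddC_exp m : size (('X + 1 : {poly R}) ^+ m) = m.+1.
Proof. by rewrite -[1]polyC1 -[1]opprK polyCN size_exp_XsubC. Qed.

Lemma size_scale_XaddC_exp_sub1 (c : R) m : c != 0 -> (0 < m)%N ->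
  size (c *: ('X + 1) ^+ m - 1) = m.+1.
Proof.
move=> c0 m0; rewrite size_polyDl size_scale // size_XaddC_exp //.
by rewrite size_polyN size_poly1 ltnS.
Qed.

Lemma lead_coef_scale_XaddC_exp_sub1 (c : R) m : c != 0 -> (0 < m)%N ->
  lead_coef (c *: ('X + 1) ^+ m - 1) = c.
Proof.
move=> c0 m0; rewrite lead_coefDl; last first.
  by rewrite size_scale // size_XaddC_exp size_polyN size_poly1 ltnS.
have monZ : ('X + 1 : {poly R}) ^+ m \is monic by rewrite monic_exp // -polyC1 monicXaddC.
by rewrite lead_coefZ (monicP monZ) mulr1.
Qed.

End PolyFacts.

Lemma coprimep_scale_sub1 (K : fieldType) (c c' : K) (w : {poly K}) : c != c' ->
  coprimep (c *: w - 1) (c' *: w - 1).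
Proof.
move=> neq; apply/Bezout_eq1_coprimepP.
have cc'0 : c - c' != 0 by rewrite subr_eq0.
exists ((c' / (c - c'))%:P, (- (c / (c - c')))%:P) => /=.
rewrite -!mul_polyC !polyCM polyCN.
transitivity (((c - c')^-1)%:P * (c%:P - c'%:P)); first ring.
by rewrite -polyCB -polyCM mulVf.
Qed.

Lemma comp_omega (K : fieldType) (p m : nat) (g : {poly K}) :
  omega K p m \Po g = (g + 1) ^+ (p ^ m) - 1.
Proof. by rewrite /omega rmorphB rmorphXn rmorphD /= comp_polyX comp_polyC rmorph1. Qed.

Lemma xiE (K : fieldType) (p m : nat) : (0 < p)%N ->
  xi K p m.+1 = \sum_(i < p) (('X + 1) ^+ (p ^ m)) ^+ i.
Proof.
move=> p_gt0; rewrite /xi /omega expnSr exprM subrX1 mulKp // subr_eq0.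
apply/eqP => /(congr1 (fun f : {poly K} => size f)); rewrite size_XaddC_exp size_poly1.
by case; apply/eqP; rewrite expn_eq0 negb_and -lt0n p_gt0.
Qed.

(** * Newton interpolation *)

Section NewtonInterpolation.
Variable K : fieldType.
Implicit Types (x f : nat -> K) (A B : {poly K}).

Fixpoint divdiff x f (k m : nat) : K :=
  if m is m'.+1 then (divdiff x f k.+1 m' - divdiff x f k m') / (x (k + m)%N - x k)
  else f k.

Definition newton_basis x (k m : nat) : {poly K} := \prod_(l < m) ('X - (x (k + l)%N)%:P).

Definition newton_poly x f (k m : nat) : {poly K} :=
  \sum_(i < m.+1) divdiff x f k i *: newton_basis x k i.

Lemma size_newton_basis x k m : size (newton_basis x k m) = m.+1.
Proof. by rewrite size_prod_XsubC /index_enum -enumT size_enum_ord. Qed.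

Lemma monic_newton_basis x k m : newton_basis x k m \is monic.
Proof. by apply: monic_prod => l _; apply: monicXsubC. Qed.

Lemma root_newton_basis x k m j : (j < m)%N -> (newton_basis x k m).[x (k + j)%N] = 0.
Proof.
move=> jm; rewrite horner_prod (bigD1 (Ordinal jm)) //=.
by rewrite !hornerE subrr mul0r.
Qed.

Lemma newton_polyS x f k m :
  newton_poly x f k m.+1 = newton_poly x f k m + divdiff x f k m.+1 *: newton_basis x k m.+1.
Proof. by rewrite /newton_poly big_ord_recr. Qed.

Lemma size_newton_poly x f k m : (size (newton_poly x f k m) <= m.+1)%N.
Proof.
apply: leq_trans (size_sum _ _ _) _; apply/bigmax_leqP => i _.
by apply: leq_trans (size_scale_leq _ _) _; rewrite size_newton_basis.
Qed.

Lemma coef_newton_poly x f k m : (newton_poly x f k m)`_m = divdiff x f k m.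
Proof.
case: m => [|m]; first by rewrite /newton_poly big_ord1 /newton_basis big_ord0 alg_polyC coefC.
rewrite newton_polyS coefD coefZ nth_default ?size_newton_poly //.
have /monicP := monic_newton_basis x k m.+1.
by rewrite lead_coefE size_newton_basis => ->; rewrite add0r mulr1.
Qed.

Lemma poly_eq0_nodes x k m (d : {poly K}) : injective x -> (size d <= m.+1)%N ->
  (forall j, (j <= m)%N -> d.[x (k + j)%N] = 0) -> d = 0.
Proof.
move=> xinj sd d0; apply/eqP; apply: contraT => dn0.
have nodes_uniq : uniq [seq x (k + j)%N | j <- iota 0 m.+1].
  by rewrite map_inj_uniq ?iota_uniq // => i j /xinj /addnI.
have nodes_roots : all (root d) [seq x (k + j)%N | j <- iota 0 m.+1].
  by apply/allP => y /mapP [j]; rewrite mem_iota add0n ltnS => jm ->; apply/eqP/d0.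
by have := max_poly_roots dn0 nodes_roots nodes_uniq; rewrite size_map size_iota ltnNge sd.
Qed.

(* The Neville-Aitken step, for interpolants [A] on [x_(k+1), ..., x_(k+m+1)] and [B]
   on [x_k, ..., x_(k+m)]. *)
Definition aitken x (k m : nat) A B : {poly K} :=
  (x (k + m.+1)%N - x k)^-1 *: (('X - (x k)%:P) * A - ('X - (x (k + m.+1)%N)%:P) * B).

Lemma aitken_interp x f k m A B : x (k + m.+1)%N != x k ->
  (forall j, (j <= m)%N -> A.[x (k.+1 + j)%N] = f (k.+1 + j)%N) ->
  (forall j, (j <= m)%N -> B.[x (k + j)%N] = f (k + j)%N) ->
  forall j, (j <= m.+1)%N -> (aitken x k m A B).[x (k + j)%N] = f (k + j)%N.
Proof.
move=> xneq Aint Bint j jm; rewrite hornerZ !hornerE.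
have den0 : x (k + m.+1)%N - x k != 0 by rewrite subr_eq0.
have [->|j0] := posnP j.
  have := Bint 0%N (leq0n m); rewrite !addn0 => ->.
  by rewrite subrr mul0r sub0r -mulNr opprB mulKf.
case: (ltnP j m.+1) => jlt.
  have Aj : A.[x (k + j)%N] = f (k + j)%N.
    by rewrite -(prednK j0) addnS -addSn Aint // -ltnS prednK.
  rewrite (Bint j) // Aj -mulrBl.
  have -> : forall y : K, y - x k - (y - x (k + m.+1)%N) = x (k + m.+1)%N - x k.
    by move=> y; ring.
  by rewrite mulKf.
have -> : j = m.+1 by apply/eqP; rewrite eqn_leq jm jlt.
have Am : A.[x (k + m.+1)%N] = f (k + m.+1)%N by rewrite addnS -addSn Aint.
by rewrite subrr mul0r subr0 Am mulKf.
Qed.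

Lemma size_aitken x k m A B : (size A <= m.+1)%N -> (size B <= m.+1)%N ->
  (size (aitken x k m A B) <= m.+2)%N.
Proof.
move=> sA sB; apply: leq_trans (size_scale_leq _ _) _.
apply: leq_trans (size_polyD _ _) _; rewrite geq_max size_polyN.
by apply/andP; split; apply: leq_trans (size_polyMleq _ _) _; rewrite size_XsubC.
Qed.

Lemma coef_aitken x k m A B : (size A <= m.+1)%N -> (size B <= m.+1)%N ->
  (aitken x k m A B)`_m.+1 = (A`_m - B`_m) / (x (k + m.+1)%N - x k).
Proof.
move=> sA sB; rewrite coefZ coefB !mulrBl !coefB !coefXM !coefCM /=.
rewrite [A`_m.+1]nth_default // [B`_m.+1]nth_default // !mulr0 !subr0.
by rewrite mulrC mulrBl.
Qed.

Lemma newton_poly_interp x f : injective x ->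
  forall m k j, (j <= m)%N -> (newton_poly x f k m).[x (k + j)%N] = f (k + j)%N.
Proof.
move=> xinj; elim=> [|m IHm] k j.
  rewrite leqn0 => /eqP ->.
  by rewrite /newton_poly big_ord1 /newton_basis big_ord0 alg_polyC hornerC addn0.
have xneq : x (k + m.+1)%N != x k.
  by apply/eqP => /xinj/eqP; rewrite -{2}(addn0 k) eqn_add2l.
set C := aitken x k m (newton_poly x f k.+1 m) (newton_poly x f k m).
have Cint := aitken_interp xneq (IHm k.+1) (IHm k).
suff -> : newton_poly x f k m.+1 = C by apply: Cint.
apply/esym/eqP; rewrite -subr_eq0; apply/eqP/(@poly_eq0_nodes x k m) => // [|i im].
  apply: size_leq_coefn0.
    apply: leq_trans (size_polyD _ _) _.
    by rewrite geq_max size_polyN size_newton_poly size_aitken ?size_newton_poly.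
  by rewrite coefB coef_aitken ?size_newton_poly // !coef_newton_poly subrr.
rewrite hornerD hornerN Cint 1?leqW // newton_polyS hornerD hornerZ.
by rewrite root_newton_basis // mulr0 addr0 IHm // subrr.
Qed.

End NewtonInterpolation.

Lemma divdiff_geometric (K : fieldType) (x0 q v0 w : K) :
  x0 != 0 -> q != 0 -> (forall l, q ^+ l.+1 != 1) ->
  forall m k, divdiff (fun l => x0 * q ^+ l) (fun l => v0 * w ^+ l) k m =
    v0 * w ^+ k / (x0 ^+ m * q ^+ (k * m)) *
    \prod_(l < m) ((w / q ^+ l - 1) / (q ^+ l.+1 - 1)).
Proof.
move=> x00 q0 q1; elim=> [|m IHm] k.
  by rewrite big_ord0 /= muln0 !expr0 !mulr1 invr1 mulr1.
rewrite /= !IHm big_ord_recr /=.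
have -> : x0 * q ^+ (k + m.+1) - x0 * q ^+ k = x0 * q ^+ k * (q ^+ m.+1 - 1).
  by rewrite exprD; ring.
rewrite mulnS mulSn !exprD (exprS x0) (exprS w).
have qm1 : q ^+ m.+1 - 1 != 0 by rewrite subr_eq0.
have qk : q ^+ k != 0 by rewrite expf_neq0.
have qm : q ^+ m != 0 by rewrite expf_neq0.
have qkm : q ^+ (k * m) != 0 by rewrite expf_neq0.
have x0m : x0 ^+ m != 0 by rewrite expf_neq0.
(* Generalize the powers so that [field] sees independent nonzero atoms. *)
move: qm1 qk qm qkm x0m; move: (q ^+ m.+1) (q ^+ k) (q ^+ m) (q ^+ (k * m)) (x0 ^+ m) (w ^+ k).
by move=> ? ? ? ? ? ? ? ? ? ? ?; field; do !(apply/andP; split).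
Qed.

(** * Non-archimedean absolute values *)

Section NonArchimedean.
Variables (p : nat) (K : fieldType) (R : realType) (abs : K -> R).
Hypotheses (p_prime : prime p) (p_odd : odd p)
  (abs0P : forall x, abs x = 0 <-> x = 0) (abs_ge0 : forall x, 0 <= abs x)
  (absM : forall x y, abs (x * y) = abs x * abs y)
  (absD : forall x y, abs (x + y) <= Num.max (abs x) (abs y))
  (absp : abs p%:R = (p%:R)^-1).

Lemma abs0 : abs 0 = 0. Proof. exact/abs0P. Qed.

Lemma abs_eq0 x : (abs x == 0) = (x == 0).
Proof. by apply/eqP/eqP => /abs0P. Qed.

Lemma abs1 : abs 1 = 1.
Proof.
have abs1_neq0 : abs 1 != 0 by rewrite abs_eq0 oner_eq0.
by apply: (mulfI abs1_neq0); rewrite -absM !mulr1.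
Qed.

Lemma absN x : abs (- x) = abs x.
Proof.
have absN1 : abs (-1) = 1.
  apply/eqP; rewrite -sqrp_eq1 ?abs_ge0 //.
  by rewrite expr2 -absM mulrNN mulr1 abs1.
by rewrite -mulN1r absM absN1 mul1r.
Qed.

Lemma absX x m : abs (x ^+ m) = abs x ^+ m.
Proof. by elim: m => [|m IHm]; rewrite ?abs1 // !exprS absM IHm. Qed.

Lemma absV x : abs x^-1 = (abs x)^-1.
Proof.
have [->|x0] := eqVneq x 0; first by rewrite invr0 abs0 invr0.
have absx0 : abs x != 0 by rewrite abs_eq0.
by apply: (mulfI absx0); rewrite -absM !mulfV // abs1.
Qed.

Lemma abs_prod (I : Type) (r : seq I) (P : pred I) (F : I -> K) :
  abs (\prod_(i <- r | P i) F i) = \prod_(i <- r | P i) abs (F i).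
Proof. exact: (big_morph abs absM abs1). Qed.

Lemma absD_le x y B : abs x <= B -> abs y <= B -> abs (x + y) <= B.
Proof. by move=> xB yB; apply: le_trans (absD x y) _; rewrite ge_max xB yB. Qed.

Lemma abs_sum_le (I : Type) (r : seq I) (P : pred I) (F : I -> K) B :
  0 <= B -> (forall i, P i -> abs (F i) <= B) -> abs (\sum_(i <- r | P i) F i) <= B.
Proof.
move=> B0 FB; elim/big_rec: _ => [|i x Pi xB]; first by rewrite abs0.
by rewrite absD_le ?FB.
Qed.

Lemma abs_addr_small x y : abs y < abs x -> abs (x + y) = abs x.
Proof.
move=> yx; apply/eqP; rewrite eq_le; apply/andP; split.
  by apply: le_trans (absD x y) _; rewrite ge_max lexx ltW.
have := absD (x + y) (- y); rewrite addrK absN le_max => /orP [-> //|xy].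
by have := le_lt_trans xy yx; rewrite ltxx.
Qed.

Lemma abs_nat_le1 m : abs m%:R <= 1.
Proof.
elim: m => [|m IHm]; first by rewrite abs0 ler01.
by rewrite -addn1 natrD absD_le ?abs1.
Qed.

Lemma invp_lt1 : (p%:R : R)^-1 < 1.
Proof. by rewrite invf_lt1 ?ltr0n ?prime_gt0 // ltr1n prime_gt1. Qed.

Lemma abs_nat_coprime m : coprime p m -> abs m%:R = 1.
Proof.
move=> pm; have [c _] := Bezoutl m (prime_gt0 p_prime).
rewrite (eqP pm) => /dvdnP [d def_d].
have cm : (c%:R * m%:R : K) = - (1 - d%:R * p%:R).
  by rewrite opprB -!natrM -def_d natrD addrAC subrr add0r.
have abs_cm : abs (c%:R * m%:R) = 1.
  rewrite cm absN abs_addr_small ?abs1 // absN absM absp.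
  apply: le_lt_trans invp_lt1.
  by rewrite ler_piMl ?invr_ge0 ?ler0n ?abs_nat_le1.
apply/eqP; rewrite eq_le abs_nat_le1 -abs_cm absM.
by rewrite ler_piMl ?abs_ge0 ?abs_nat_le1.
Qed.

Lemma abs_nat m : (0 < m)%N -> abs m%:R = (p%:R ^+ logn p m)^-1.
Proof.
move=> m0; have [m' pm' def_m] := pfactor_coprime p_prime m0.
rewrite [in LHS]def_m natrM absM abs_nat_coprime // mul1r natrX absX absp.
by rewrite exprVn.
Qed.

Lemma abs_nat_neq0 m : (0 < m)%N -> abs (m%:R : K) != 0.
Proof. by move=> m0; rewrite abs_nat // invr_eq0 expf_neq0 // pnatr_eq0 -lt0n prime_gt0. Qed.

Lemma natp_neq0 : p%:R != 0 :> K.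
Proof. by rewrite -abs_eq0 abs_nat_neq0 // prime_gt0. Qed.

Section NearOne.
Variable w : K.
Hypothesis w_near1 : abs (w - 1) <= (p%:R)^-1.

Lemma abs_near1 : abs w = 1.
Proof.
by rewrite -(subrK 1 w) addrC abs_addr_small abs1 // (le_lt_trans w_near1 invp_lt1).
Qed.

Lemma abs_expr_sub1_le m : abs (w ^+ m - 1) <= abs (w - 1).
Proof.
elim: m => [|m IHm]; first by rewrite subrr abs0 abs_ge0.
have -> : w ^+ m.+1 - 1 = w * (w ^+ m - 1) + (w - 1) by rewrite exprS; ring.
by rewrite absD_le // absM abs_near1 mul1r.
Qed.

Lemma abs_sum_expr_sub1_le (m : nat) (F : 'I_m -> nat) :
  abs (\sum_(i < m) (w ^+ F i - 1)) <= (p%:R)^-1.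
Proof.
apply: abs_sum_le => [|i _]; first by rewrite invr_ge0 ler0n.
exact: le_trans (abs_expr_sub1_le _) w_near1.
Qed.

Lemma abs_sum_expr_coprime m : coprime p m -> abs (\sum_(i < m) w ^+ i) = 1.
Proof.
move=> pm; have -> : \sum_(i < m) w ^+ i = m%:R + \sum_(i < m) (w ^+ i - 1).
  by rewrite sumrB sumr_const card_ord addrC subrK.
rewrite abs_addr_small abs_nat_coprime //.
exact: le_lt_trans (abs_sum_expr_sub1_le _) invp_lt1.
Qed.

(* Writing [w = 1 + e], the sum is [p + e * (p (p - 1) / 2 + ...)], and the
   middle term is divisible by [p] because [p] is odd. *)
Lemma abs_sum_expr_p : abs (\sum_(i < p) w ^+ i) = (p%:R)^-1.
Proof.
set S := \sum_(i < p) \sum_(r < i) w ^+ r.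
have def_sum : \sum_(i < p) w ^+ i = p%:R + (w - 1) * S.
  rewrite mulr_sumr -[X in X%:R](card_ord p) -sumr_const -big_split /=.
  by apply: eq_bigr => i _; rewrite -subrX1; ring.
have def_S : S = (\sum_(i < p) (i : nat))%:R + \sum_(i < p) \sum_(r < i) (w ^+ r - 1).
  rewrite natr_sum -big_split /=; apply: eq_bigr => i _.
  by rewrite sumrB sumr_const card_ord addrC subrK.
have sum_iota : (\sum_(i < p) (i : nat))%N = (p * (p.-1)./2)%N.
  by rewrite -bin2odd // -bin2_sum big_mkord.
have abs_S : abs S <= (p%:R)^-1.
  rewrite def_S; apply: absD_le.
    by rewrite sum_iota natrM absM absp ler_piMr ?invr_ge0 ?ler0n ?abs_nat_le1.
  apply: abs_sum_le => [|i _]; first by rewrite invr_ge0 ler0n.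
  exact: abs_sum_expr_sub1_le.
rewrite def_sum abs_addr_small absp // absM.
apply: (@le_lt_trans _ _ ((p%:R)^-1 * (p%:R)^-1)); first exact: ler_pM.
by rewrite gtr_pMr ?invr_gt0 ?ltr0n ?prime_gt0 // invp_lt1.
Qed.

End NearOne.

Lemma abs_expr_sub1 w m : abs (w - 1) <= (p%:R)^-1 ->
  abs (w ^+ m - 1) = abs m%:R * abs (w - 1).
Proof.
move=> w_near1; elim/ltn_ind: m => m IHm.
have [->|m0] := posnP m; first by rewrite subrr abs0 mul0r.
have [/dvdnP [m' def_m]|pNm] := boolP (p %| m)%N.
  have m'm : (m' < m)%N.
    by rewrite def_m ltn_Pmulr ?prime_gt1 //; move: m0; rewrite def_m muln_gt0 => /andP [].
  rewrite def_m exprM subrX1 absM abs_sum_expr_p; last first.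
    exact: le_trans (abs_expr_sub1_le w_near1 _) w_near1.
  by rewrite IHm // natrM absM absp mulrAC.
rewrite subrX1 absM abs_sum_expr_coprime ?prime_coprime //.
by rewrite abs_nat_coprime ?prime_coprime // mul1r mulr1.
Qed.

Definition coef_bounded (B : R) (f : {poly K}) := forall i, abs f`_i <= B.

Lemma coef_bounded0 B : 0 <= B -> coef_bounded B 0.
Proof. by move=> B0 i; rewrite coef0 abs0. Qed.

Lemma coef_boundedW B B' f : B <= B' -> coef_bounded B f -> coef_bounded B' f.
Proof. by move=> BB' fB i; apply: le_trans (fB i) BB'. Qed.

Lemma coef_boundedD B f g : coef_bounded B f -> coef_bounded B g -> coef_bounded B (f + g).
Proof. by move=> fB gB i; rewrite coefD absD_le. Qed.

Lemma coef_boundedB B f g : coef_bounded B f -> coef_bounded B g -> coef_bounded B (f - g).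
Proof. by move=> fB gB; apply: coef_boundedD => // i; rewrite coefN absN. Qed.

Lemma coef_boundedZ B c f : coef_bounded B f -> coef_bounded (abs c * B) (c *: f).
Proof. by move=> fB i; rewrite coefZ absM ler_wpM2l. Qed.

Lemma coef_boundedC B c : 0 <= B -> abs c <= B -> coef_bounded B c%:P.
Proof. by move=> B0 cB i; rewrite coefC; case: (i == 0)%N; rewrite ?abs0. Qed.

Lemma coef_boundedX : coef_bounded 1 'X.
Proof. by move=> i; rewrite coefX; case: (i == 1)%N; rewrite ?abs1 ?abs0 ?ler01. Qed.

Lemma coef_bounded_XaddC c : abs c <= 1 -> coef_bounded 1 ('X + c%:P).
Proof. by move=> c1; apply: coef_boundedD; [apply: coef_boundedX | apply: coef_boundedC]. Qed.

Lemma coef_boundedM B1 B2 f g : 0 <= B1 -> 0 <= B2 ->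
  coef_bounded B1 f -> coef_bounded B2 g -> coef_bounded (B1 * B2) (f * g).
Proof.
move=> B10 B20 fB gB i; rewrite coefM; apply: abs_sum_le => [|j _].
  exact: mulr_ge0.
by rewrite absM ler_pM.
Qed.

Lemma coef_bounded_sum (I : Type) (r : seq I) (P : pred I) (F : I -> {poly K}) B :
  0 <= B -> (forall i, P i -> coef_bounded B (F i)) ->
  coef_bounded B (\sum_(i <- r | P i) F i).
Proof.
move=> B0 FB; elim/big_rec: _ => [|i f Pi fB]; first exact: coef_bounded0.
by apply: coef_boundedD => //; apply: FB.
Qed.

Lemma coef_bounded_prod (I : Type) (r : seq I) (P : pred I) (F : I -> {poly K}) :
  (forall i, P i -> coef_bounded 1 (F i)) -> coef_bounded 1 (\prod_(i <- r | P i) F i).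
Proof.
move=> FB; elim/big_rec: _ => [|i f Pi fB]; first by apply: coef_boundedC; rewrite ?abs1.
by rewrite -[1 : R]mulr1; apply: coef_boundedM => //; apply: FB.
Qed.

Lemma coef_boundedXn f m : coef_bounded 1 f -> coef_bounded 1 (f ^+ m).
Proof.
move=> fB; elim: m => [|m IHm]; first by rewrite expr0; apply: coef_boundedC; rewrite ?abs1.
by rewrite exprS -[1 : R]mulr1; apply: coef_boundedM.
Qed.

Lemma coef_bounded_comp B f g : 0 <= B ->
  coef_bounded B f -> coef_bounded 1 g -> coef_bounded B (f \Po g).
Proof.
move=> B0 fB gB; rewrite comp_polyE; apply: coef_bounded_sum => // i _.
apply: (@coef_boundedW (abs f`_i * 1)); first by rewrite mulr1.
by apply: coef_boundedZ; apply: coef_boundedXn.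
Qed.

Lemma norm1_ge0 f : 0 <= norm1 abs f.
Proof. by rewrite /norm1; elim/big_rec: _ => // i x _ x0; rewrite le_max x0 orbT. Qed.

Lemma norm1_le B f : 0 <= B -> coef_bounded B f -> norm1 abs f <= B.
Proof. by move=> B0 fB; apply: bigmax_le. Qed.

Lemma coef_bounded_norm1 f : coef_bounded (norm1 abs f) f.
Proof.
move=> i; case: (ltnP i (size f)) => [isf|sfi]; last by rewrite nth_default ?abs0 ?norm1_ge0.
exact: (le_bigmax _ (fun j : 'I_(size f) => abs f`_j) (Ordinal isf)).
Qed.

(* Peel off the leading term of [f]; it is integral because [L] has a unit leading
   coefficient. *)
Lemma coef_bounded1_divp L f : coef_bounded 1 L -> abs (lead_coef L) = 1 ->
  coef_bounded 1 (L * f) -> coef_bounded 1 f.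
Proof.
move=> LB lcL; elim: (size f) {-2}f (leqnn (size f)) => [|s IHs] g sg LgB.
  by move: sg; rewrite leqn0 size_poly_eq0 => /eqP ->; apply: coef_bounded0.
have [->|g0] := eqVneq g 0; first exact: coef_bounded0.
set d := (size g).-1; set r := lead_coef g.
have r1 : abs r <= 1.
  by have := LgB (size (L * g)).-1; rewrite -lead_coefE lead_coefM absM lcL mul1r.
have rXB : coef_bounded 1 (r *: 'X^d).
  apply: (@coef_boundedW (abs r * 1)); first by rewrite mulr1.
  by apply/coef_boundedZ/coef_boundedXn/coef_boundedX.
have sgd : size g = d.+1 by rewrite prednK // size_poly_gt0.
have sg' : (size (g - r *: 'X^d)%R <= s)%N.
  apply: (@leq_trans d); last by rewrite -ltnS -sgd.
  apply: size_leq_coefn0.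
    apply: leq_trans (size_polyD _ _) _; rewrite geq_max size_polyN -sgd leqnn /=.
    by apply: leq_trans (size_scale_leq _ _) _; rewrite size_polyXn sgd.
  by rewrite coefB coefZ coefXn eqxx mulr1 /r lead_coefE subrr.
rewrite -(subrK (r *: 'X^d) g); apply: coef_boundedD => //; apply: IHs => //.
rewrite mulrBr; apply: coef_boundedB => //; rewrite -scalerAr.
apply: (@coef_boundedW (abs r * 1)); first by rewrite mulr1.
apply: coef_boundedZ; rewrite -[1 : R]mulr1; apply: coef_boundedM => //.
exact/coef_boundedXn/coef_boundedX.
Qed.

Lemma abs_coef0_of_horner f x : coef_bounded 1 f -> abs x < 1 ->
  abs f.[x] = 1 -> abs f`_0 = 1.
Proof.
move=> fB x1 fx1; have dx : abs (f.[x] - f`_0) < 1.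
  rewrite -horner_coef0 !horner_coef -sumrB.
  apply: le_lt_trans (x1); apply: abs_sum_le => [|[i _] _ /=]; first exact: abs_ge0.
  case: i => [|i]; first by rewrite !expr0 subrr abs0 abs_ge0.
  rewrite -mulrBr absM expr0n subr0 absX.
  apply: (@le_trans _ _ (abs x ^+ i.+1)); first by rewrite ler_piMl ?exprn_ge0 ?abs_ge0 ?fB.
  by rewrite -[X in _ <= X]expr1 ler_wiXn2l ?abs_ge0 ?ltW.
by rewrite -[f`_0](subKr f.[x]) abs_addr_small fx1 // absN.
Qed.

(* [e := 1 - f / f_0] is integral without constant term, so the partial sums
   [S k := f_0^-1 * sum_(j <= k) e^j] of the inverse of [f] stabilise coefficientwise. *)
Lemma ps_Zp_unit_poly f : coef_bounded 1 f -> abs f`_0 = 1 -> ps_Zp_unit abs (ps_of_poly f).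
Proof.
move=> fB f01; have f00 : f`_0 != 0 by rewrite -abs_eq0 f01 oner_eq0.
have abs_f0V : abs (f`_0)^-1 = 1 by rewrite absV f01 invr1.
set e := 1 - (f`_0)^-1 *: f.
have eB : coef_bounded 1 e.
  apply: coef_boundedB; first by apply: coef_boundedC; rewrite ?abs1.
  by rewrite -abs_f0V -[abs _]mulr1; apply: coef_boundedZ.
have e0 : e`_0 = 0 by rewrite coefB coefZ coef1 mulVf // subrr.
have e_low j m : (m < j)%N -> (e ^+ j)`_m = 0.
  have Xe : 'X %| e by rewrite -['X]subr0 dvdp_XsubCl /root horner_coef0 e0.
  by move=> mj; rewrite -(divpK Xe) exprMn coefMXn mj.
pose S k := (f`_0)^-1 *: \sum_(j < k.+1) e ^+ j.
have S_stable k m : (m <= k)%N -> (S k)`_m = (S m)`_m.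
  elim: k => [|k IHk]; first by rewrite leqn0 => /eqP ->.
  rewrite leq_eqVlt => /orP [/eqP -> //|mk].
  rewrite /S big_ord_recr scalerDr coefD [(_ *: e ^+ _)`__]coefZ e_low // mulr0 addr0.
  exact: IHk.
have fS k : f * S k = 1 - e ^+ k.+1.
  have {1}-> : f = f`_0 *: (1 - e) by rewrite opprB addrC subrK scalerA mulfV // scale1r.
  rewrite -scalerAl -scalerAr scalerA mulfV // scale1r.
  by rewrite -opprB mulNr -subrX1 opprB.
split=> [i|]; first exact: fB.
exists (fun k => (S k)`_k); split.
  move=> k; rewrite /S coefZ absM abs_f0V mul1r.
  have sumB : coef_bounded 1 (\sum_(j < k.+1) e ^+ j).
    by apply: coef_bounded_sum => [|j _]; [exact: ler01 | exact: coef_boundedXn].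
  exact: sumB.
apply: boolp.funext => k; rewrite /psmul /ps_of_poly.
transitivity ((f * S k)`_k).
  by rewrite coefM; apply: eq_bigr => i _; rewrite S_stable // leq_subr.
by rewrite fS coefB coef1 e_low // subr0 /ps_one; case: k.
Qed.

(** * The interpolant *)

Section Interpolant.
Variables (u : K) (a : int) (N n : nat).
Hypotheses (u_near1 : abs (u - 1) <= (p%:R)^-1) (u_neq1 : u != 1)
  (N_gt0 : (0 < N)%N) (n_gt0 : (0 < n)%N).

Let q := (p ^ n.-1)%N.
Let P := (p ^ n)%N.
Let Z : {poly K} := 'X + 1.
Let W : {poly K} := Z ^+ P.

Lemma P_eq : P = (q * p)%N. Proof. by rewrite /P /q -expnSr prednK. Qed.

Lemma q_gt0 : (0 < q)%N. Proof. by rewrite expn_gt0 prime_gt0. Qed.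

Lemma P_gt0 : (0 < P)%N. Proof. by rewrite expn_gt0 prime_gt0. Qed.

Lemma u_neq0 : u != 0. Proof. by rewrite -abs_eq0 abs_near1 ?oner_eq0. Qed.

Lemma abs_uV_sub1 : abs (u^-1 - 1) = abs (u - 1).
Proof.
have -> : u^-1 - 1 = - (u^-1 * (u - 1)) by rewrite mulrBr mulVf ?u_neq0 // mulr1 opprB.
by rewrite absN absM absV abs_near1 // invr1 mul1r.
Qed.

Lemma uV_near1 : abs (u^-1 - 1) <= (p%:R)^-1.
Proof. by rewrite abs_uV_sub1. Qed.

Lemma expr_u_neq1 m : (0 < m)%N -> u ^+ m != 1.
Proof.
move=> m0; rewrite -subr_eq0 -abs_eq0 abs_expr_sub1 // mulf_neq0 ?abs_nat_neq0 //.
by rewrite abs_eq0 subr_eq0.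
Qed.

Let uj (k : nat) : K := u ^ (a + k%:Z).

Lemma ujE k : uj k = u ^ a * u ^+ k.
Proof. by rewrite /uj expfzDr // u_neq0. Qed.

Lemma uj_near1 k : abs (uj k - 1) <= (p%:R)^-1.
Proof.
rewrite /uj; case: (a + k%:Z) => m.
  exact: le_trans (abs_expr_sub1_le u_near1 m) u_near1.
rewrite NegzE -exprnN -exprVn.
exact: le_trans (abs_expr_sub1_le uV_near1 m.+1) uV_near1.
Qed.

Lemma abs_uj k : abs (uj k) = 1. Proof. exact/abs_near1/uj_near1. Qed.

Lemma uj_neq0 k : uj k != 0. Proof. by rewrite -abs_eq0 abs_uj oner_eq0. Qed.

Lemma abs_ua : abs (u ^ a) = 1.
Proof. by have := abs_uj 0; rewrite ujE expr0 mulr1. Qed.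

Lemma ua_neq0 : u ^ a != 0. Proof. by rewrite -abs_eq0 abs_ua oner_eq0. Qed.

Lemma uj_expr_inj M : (0 < M)%N -> injective (fun k => uj k ^+ M).
Proof.
move=> M0 k k'; rewrite /= !ujE !exprMn => /(mulfI (expf_neq0 _ ua_neq0)).
wlog lt_kk' : k k' / (k < k')%N.
  by move=> hw; case: (ltngtP k k') => [/hw //|/hw h /esym /h //|//].
rewrite -(subnKC (ltnW lt_kk')) exprD exprMn -[X in X = _]mulr1.
move=> /(mulfI (expf_neq0 _ (expf_neq0 _ u_neq0)))/esym/eqP.
by rewrite -exprM (negPf (expr_u_neq1 _)) // muln_gt0 subn_gt0 lt_kk'.
Qed.

Lemma twistE k f : twist u (a + k%:Z) f = f \Po ((uj k)^-1 *: Z - 1).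
Proof. by rewrite /twist invr_expz mul_polyC. Qed.

Let Y k := ((uj k)^-1 *: Z) ^+ q.

Lemma exprY k i : Y k ^+ i = (uj k)^-1 ^+ (q * i) *: Z ^+ (q * i).
Proof. by rewrite -exprM exprZn. Qed.

Lemma twist_omega m k :
  twist u (a + k%:Z) (omega K p m) = ((uj k)^-1 *: Z) ^+ (p ^ m) - 1.
Proof. by rewrite twistE comp_omega subrK. Qed.

Lemma twist_xi k : twist u (a + k%:Z) (xi K p n) = \sum_(i < p) Y k ^+ i.
Proof.
have -> : xi K p n = xi K p n.-1.+1 by rewrite prednK.
rewrite twistE xiE ?prime_gt0 // rmorph_sum; apply: eq_bigr => i _.
by rewrite !rmorphXn rmorphD /= comp_polyX comp_polyC subrK.
Qed.

Lemma twist_omega_split k : twist u (a + k%:Z) (omega K p n) =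
  twist u (a + k%:Z) (omega K p n.-1) * twist u (a + k%:Z) (xi K p n).
Proof. by rewrite !twist_omega twist_xi -/P P_eq exprM subrX1. Qed.

Lemma size_twist_omega m k : size (twist u (a + k%:Z) (omega K p m)) = (p ^ m).+1.
Proof.
rewrite twist_omega exprZn size_scale_XaddC_exp_sub1 ?expn_gt0 ?prime_gt0 //.
by rewrite expf_neq0 ?invr_eq0 ?uj_neq0.
Qed.

Lemma lead_coef_twist_omega m k :
  lead_coef (twist u (a + k%:Z) (omega K p m)) = (uj k)^-1 ^+ (p ^ m).
Proof.
rewrite twist_omega exprZn lead_coef_scale_XaddC_exp_sub1 ?expn_gt0 ?prime_gt0 //.
by rewrite expf_neq0 ?invr_eq0 ?uj_neq0.
Qed.

Lemma coprimep_twist_omega m k k' : k != k' ->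
  coprimep (twist u (a + k%:Z) (omega K p m)) (twist u (a + k'%:Z) (omega K p m)).
Proof.
move=> kk'; rewrite !twist_omega !exprZn; apply: coprimep_scale_sub1.
rewrite !exprVn; apply: contra_neq kk' => /invr_inj.
by apply: uj_expr_inj; rewrite expn_gt0 prime_gt0.
Qed.

(* Modulo [omega_n^(j)] for [j = a + k], [(1+x)^(p^n)] is the constant [node k] and
   [xi_n^(j) / p] is [sum_(i < p) node_val i k * (1+x)^(q i)].  The nodes and values are
   spelled as geometric progressions in [l] for [divdiff_geometric]; [nodeE] and
   [node_valE] give their meaning.  [interp_y] is the interpolant in the variable [1+x]. *)
Definition node (l : nat) : K := (u ^ a) ^+ P * (u ^+ P) ^+ l.

Definition node_val (i l : nat) : K :=
  ((p%:R)^-1 * (u ^ a)^-1 ^+ (q * i)) * (u^-1 ^+ (q * i)) ^+ l.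

Definition newton_part (i : nat) : {poly K} := newton_poly node (node_val i) 0 N.-1.

Definition interp_y : {poly K} := \sum_(i < p) 'X^(q * i) * (newton_part i \Po 'X^P).

Lemma nodeE l : node l = uj l ^+ P.
Proof. by rewrite ujE exprMn exprAC. Qed.

Lemma node_valE i l : node_val i l = (p%:R)^-1 * (uj l)^-1 ^+ (q * i).
Proof.
by rewrite ujE invfM exprMn -exprVn exprAC mulrA.
Qed.

Lemma node_inj : injective node.
Proof. by move=> k k'; rewrite !nodeE; apply: (uj_expr_inj P_gt0). Qed.

Lemma newton_part_interp i l : (l < N)%N -> (newton_part i).[node l] = node_val i l.
Proof.
move=> lN; rewrite -(add0n l) newton_poly_interp //; first exact: node_inj.
by rewrite -ltnS prednK.
Qed.

Lemma twist_omega_node k : twist u (a + k%:Z) (omega K p n) =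
  (node k)^-1 *: (('X - (node k)%:P) \Po W).
Proof.
rewrite twist_omega exprZn nodeE exprVn rmorphB /= comp_polyX comp_polyC.
by rewrite scalerBr scale_polyC mulVf ?expf_neq0 ?uj_neq0.
Qed.

Lemma interp_yZ : interp_y \Po Z = \sum_(i < p) Z ^+ (q * i) * (newton_part i \Po W).
Proof.
rewrite rmorph_sum; apply: eq_bigr => i _.
by rewrite rmorphM /= comp_Xn_poly -comp_polyA comp_Xn_poly.
Qed.

Lemma interp_y_cong k : (k < N)%N -> twist u (a + k%:Z) (omega K p n) %|
  interp_y \Po Z - (p%:R)^-1 *: twist u (a + k%:Z) (xi K p n).
Proof.
move=> kN; rewrite twist_omega_node dvdpZl; last by rewrite invr_eq0 nodeE expf_neq0 ?uj_neq0.
rewrite twist_xi scaler_sumr interp_yZ -sumrB; apply: dvdp_sum => i _.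
rewrite exprY scalerA -node_valE -newton_part_interp // -mul_polyC [_%:P * _]mulrC -mulrBr.
have -> : forall c, newton_part i \Po W - c%:P = (newton_part i - c%:P) \Po W.
  by move=> c; rewrite rmorphB /= comp_polyC.
apply/dvdp_mull/dvdp_comp_poly.
by rewrite dvdp_XsubCl /root !hornerE subrr.
Qed.

Lemma size_interp_part i :
  (size ('X^(q * i) * (newton_part i \Po 'X^P))%R <= (q * i + P * N.-1).+1)%N.
Proof.
apply: leq_trans (size_polyMleq _ _) _; rewrite size_polyXn /=.
have := size_comp_poly_leq (newton_part i) 'X^P; rewrite size_polyXn /=.
have := size_newton_poly node (node_val i) 0 N.-1; rewrite -/(newton_part i).
move: (size _) (size _) => s s' ss' s's; nia.
Qed.

Lemma size_interp_y : (size interp_y <= P * N)%N.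
Proof.
apply: leq_trans (size_sum _ _ _) _; apply/bigmax_leqP => i _.
apply: leq_trans (size_interp_part i) _.
have ip : (i < p)%N := ltn_ord i.
have := q_gt0; rewrite P_eq -{2}(prednK N_gt0); nia.
Qed.

Variable t : {poly K}.
Hypotheses (t_size : (size t <= p ^ n * N)%N)
  (t_cong : forall j, j \in Zinterval a N ->
      twist u j (omega K p n) %| (t - (p%:R)^-1 *: twist u j (xi K p n))).

Lemma t_cong_at k : (k < N)%N -> twist u (a + k%:Z) (omega K p n) %|
  t - (p%:R)^-1 *: twist u (a + k%:Z) (xi K p n).
Proof. by move=> kN; apply/t_cong/(map_f (fun k : nat => a + k%:Z)); rewrite mem_iota. Qed.

Lemma t_eq_interp : t = interp_y \Po Z.
Proof.
apply: (@eq_poly_coprime_mod _ _ (iota 0 N) (fun k => twist u (a + k%:Z) (omega K p n))).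
- exact: iota_uniq.
- by move=> k k' _ _; apply: coprimep_twist_omega.
- move=> k; rewrite mem_iota => kN.
  pose c := (p%:R)^-1 *: twist u (a + k%:Z) (xi K p n).
  have -> : t - (interp_y \Po Z) = (t - c) - (interp_y \Po Z - c).
    by rewrite opprB addrA subrK.
  by rewrite dvdp_sub ?t_cong_at ?interp_y_cong.
rewrite (size_prod_uniform _ (fun k => size_twist_omega n k)) size_iota ltnS mulnC.
apply: leq_trans (size_polyD _ _) _; rewrite geq_max size_polyN t_size.
by rewrite size_comp_poly2 ?size_XaddC // size_interp_y.
Qed.

Let xi_tw k := twist u (a + k%:Z) (xi K p n).

Lemma xi_tw_dvd_t k : (k < N)%N -> xi_tw k %| t.
Proof.
move=> kN; have xi_dvd_omega : xi_tw k %| twist u (a + k%:Z) (omega K p n).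
  by rewrite twist_omega_split dvdp_mull.
rewrite -(subrK ((p%:R)^-1 *: xi_tw k) t); apply: dvdp_add.
  exact: dvdp_trans xi_dvd_omega (t_cong_at kN).
by rewrite dvdpZr ?invr_eq0 ?natp_neq0.
Qed.

Lemma omega_prev_dvd_t1 k : (k < N)%N -> twist u (a + k%:Z) (omega K p n.-1) %| t - 1.
Proof.
move=> kN; have omega_prev_dvd : twist u (a + k%:Z) (omega K p n.-1) %|
    twist u (a + k%:Z) (omega K p n) by rewrite twist_omega_split dvdp_mulr.
have -> : t - 1 = (t - (p%:R)^-1 *: xi_tw k) + (p%:R)^-1 *: (xi_tw k - (p%:R)%:P).
  by rewrite scalerBr scale_polyC mulVf ?natp_neq0 // addrA subrK.
apply: dvdp_add; first exact: dvdp_trans omega_prev_dvd (t_cong_at kN).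
rewrite dvdpZr ?invr_eq0 ?natp_neq0 //.
have -> : (p%:R)%:P = \sum_(i < p) (1 : {poly K}) by rewrite sumr_const card_ord polyC_natr.
rewrite /xi_tw twist_xi -sumrB.
by apply: dvdp_sum => i _; rewrite subrX1 twist_omega dvdp_mulr.
Qed.

Lemma coprimep_xi_tw k k' : k != k' -> coprimep (xi_tw k) (xi_tw k').
Proof.
move/(coprimep_twist_omega n); rewrite !twist_omega_split.
by rewrite coprimepMl coprimepMr coprimepMr => /andP [_ /andP []].
Qed.

Lemma size_xi_tw k : size (xi_tw k) = (P - q).+1.
Proof.
have omega0 : twist u (a + k%:Z) (omega K p n) != 0.
  by rewrite -size_poly_eq0 size_twist_omega.
move: omega0 (size_twist_omega n k); rewrite twist_omega_split mulf_eq0 negb_or.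
case/andP=> omega_prev0 xi0; rewrite size_mul // size_twist_omega -/q -/P P_eq /=.
have := q_gt0; have := prime_gt1 p_prime; move: (size _) => s; nia.
Qed.

Lemma prod_Zinterval (F : int -> {poly K}) :
  \prod_(j <- Zinterval a N) F j = \prod_(k <- iota 0 N) F (a + k%:Z).
Proof. exact: big_map. Qed.

Let ell := ellS p u n (Zinterval a N).
Let omega_prevS := omegaS p u n.-1 (Zinterval a N).
Let xi_prod := \prod_(k <- iota 0 N) xi_tw k.

Lemma ellE : ell = \prod_(k <- iota 0 N) ((p%:R)^-1 *: xi_tw k).
Proof. exact: prod_Zinterval. Qed.

Lemma ell_xi_prod : ell = (p%:R ^+ N)^-1 *: xi_prod.
Proof.
rewrite ellE scaler_prod; have := prodr_const_nat 0 N (p%:R^-1 : K).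
by rewrite /index_iota subn0 exprVn => ->.
Qed.

Lemma omegaS_split : omegaS p u n (Zinterval a N) = omega_prevS * xi_prod.
Proof.
rewrite /omega_prevS /xi_prod /omegaS !prod_Zinterval -big_split /=.
by apply: eq_bigr => k _; rewrite twist_omega_split.
Qed.

Lemma size_ell : size ell = (N * (P - q)).+1.
Proof.
rewrite ellE (@size_prod_uniform _ _ _ _ (P - q)) ?size_iota // => k.
by rewrite size_scale ?invr_eq0 ?natp_neq0 ?size_xi_tw.
Qed.

Lemma size_omega_prevS : size omega_prevS = (N * q).+1.
Proof.
rewrite /omega_prevS /omegaS prod_Zinterval.
by rewrite (size_prod_uniform _ (size_twist_omega _)) size_iota.
Qed.

Lemma ell_dvd_t : ell %| t.
Proof.
rewrite ellE; apply: dvdp_prod_coprime; first exact: iota_uniq.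
  by move=> k k' _ _ kk'; rewrite coprimepZl ?coprimepZr ?invr_eq0 ?natp_neq0 ?coprimep_xi_tw.
by move=> k; rewrite mem_iota => kN; rewrite dvdpZl ?invr_eq0 ?natp_neq0 ?xi_tw_dvd_t.
Qed.

Lemma omega_prevS_dvd_t1 : omega_prevS %| t - 1.
Proof.
rewrite /omega_prevS /omegaS prod_Zinterval; apply: dvdp_prod_coprime; first exact: iota_uniq.
  by move=> k k' _ _; apply: coprimep_twist_omega.
by move=> k; rewrite mem_iota => kN; apply: omega_prev_dvd_t1.
Qed.

Let r := t %/ ell.

Lemma t_eq_mul : t = r * ell.
Proof. by rewrite divpK // ell_dvd_t. Qed.

Lemma size_cofactor : (size r < size omega_prevS)%N.
Proof.
rewrite size_omega_prevS ltnS.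
have [->|r0] := eqVneq r 0; first by rewrite size_poly0.
have ell0 : ell != 0 by rewrite -size_poly_eq0 size_ell.
move: t_size; rewrite -/P t_eq_mul size_mul // size_ell P_eq.
have := q_gt0; have := prime_gt1 p_prime; move: (size r) => s; nia.
Qed.

Lemma interpolant_divisibility :
  [/\ exists r0 : {poly K}, is_inv_mod ell omega_prevS r0 /\ t = r0 * ell,
      (omegaS p u n (Zinterval a N) %/ omega_prevS) %| t
    & omega_prevS %| t - 1].
Proof.
split; last exact: omega_prevS_dvd_t1.
  exists r; split; last exact: t_eq_mul.
  by split; [exact: size_cofactor | rewrite -t_eq_mul; exact: omega_prevS_dvd_t1].
rewrite omegaS_split mulKp -?size_poly_eq0 ?size_omega_prevS //.
have pN0 : (p%:R ^+ N)^-1 != 0 :> K by rewrite invr_eq0 expf_neq0 ?natp_neq0.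
by rewrite -(dvdpZl _ _ pN0) -ell_xi_prod ell_dvd_t.
Qed.

Lemma abs_divdiff_factor i l :
  abs ((u^-1 ^+ (q * i) / (u ^+ P) ^+ l - 1) / ((u ^+ P) ^+ l.+1 - 1)) =
  abs (i + p * l)%:R * p%:R / abs l.+1%:R.
Proof.
have -> : u^-1 ^+ (q * i) / (u ^+ P) ^+ l = u^-1 ^+ (q * (i + p * l)).
  by rewrite -!exprVn -!exprM -exprD P_eq mulnDr mulnA.
rewrite -exprM absM absV abs_expr_sub1 ?uV_near1 // abs_uV_sub1 abs_expr_sub1 //.
rewrite P_eq !natrM !absM absp.
have := abs_nat_neq0 q_gt0; have := abs_nat_neq0 (ltn0Sn l).
have : abs (u - 1) != 0 by rewrite abs_eq0 subr_eq0.
have : (p%:R : R) != 0 by rewrite pnatr_eq0 -lt0n prime_gt0.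
move: (abs q%:R) (abs l.+1%:R) (abs (u - 1)) (p%:R : R) => x y z w w0 z0 y0 x0.
by field; rewrite x0 y0 z0 w0.
Qed.

Lemma abs_divdiff i m : abs (divdiff node (node_val i) 0 m) =
  p%:R * \prod_(l < m) (abs (i + p * l)%:R * p%:R / abs l.+1%:R).
Proof.
have uP1 l : (u ^+ P) ^+ l.+1 != 1 by rewrite -exprM expr_u_neq1 // muln_gt0 P_gt0.
have := divdiff_geometric ((p%:R)^-1 * (u ^ a)^-1 ^+ (q * i)) (u^-1 ^+ (q * i))
  (expf_neq0 P ua_neq0) (expf_neq0 P u_neq0) uP1 m 0.
rewrite -[fun l => _ * _]/node -[fun l => _]/(node_val i) => ->.
rewrite mul0n !expr0 !mulr1 absM abs_prod !absM absV !absX absV absp invrK.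
rewrite absV absX abs_ua invr1 absX abs_ua !expr1n invr1 !mulr1.
by congr (_ * _); apply: eq_bigr => l _; rewrite abs_divdiff_factor.
Qed.

Lemma prod_p_div_abs_nat m :
  \prod_(l < m) (p%:R / abs l.+1%:R) = p%:R ^+ (m + logn p m`!) :> R.
Proof.
have prod_abs : \prod_(l < m) abs l.+1%:R = abs m`!%:R.
  elim: m => [|m IHm]; first by rewrite big_ord0 abs1.
  by rewrite big_ord_recr /= IHm factS natrM absM mulrC.
rewrite big_split /= prodr_const card_ord prodfV prod_abs abs_nat ?fact_gt0 //.
by rewrite invrK exprD.
Qed.

Lemma abs_divdiff_le i m :
  abs (divdiff node (node_val i) 0 m) <= p%:R ^+ (m.+1 + logn p m`!).
Proof.
rewrite abs_divdiff addSn exprS ler_wpM2l ?ler0n // -prod_p_div_abs_nat.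
apply: ler_prod => l _; rewrite !mulr_ge0 ?invr_ge0 ?ler0n ?abs_ge0 //=.
by rewrite -mulrA ler_piMl ?abs_nat_le1 // mulr_ge0 ?invr_ge0 ?ler0n ?abs_ge0.
Qed.

Lemma abs_divdiff_last m :
  abs (divdiff node (node_val p.-1) 0 m) = p%:R ^+ (m.+1 + logn p m`!).
Proof.
rewrite abs_divdiff addSn exprS -prod_p_div_abs_nat; congr (_ * _).
apply: eq_bigr => l _; rewrite abs_nat_coprime ?mul1r // prime_coprime //.
have := prime_gt1 p_prime; rewrite dvdn_addl ?dvdn_mulr // => p1.
by rewrite gtnNdvd //; lia.
Qed.

Lemma exponent_le_beta k : (k < N)%N -> (k.+1 + logn p k`! <= N + beta p N)%N.
Proof.
move=> kN; rewrite leq_add // /beta dvdn_leq_log ?fact_gt0 //.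
have kN' : (k <= N.-1)%N by rewrite -ltnS prednK.
by rewrite -(bin_fact kN') mulnCA dvdn_mulr.
Qed.

Lemma coef_bounded_Z : coef_bounded 1 Z.
Proof. by rewrite /Z -polyC1; apply: coef_bounded_XaddC; rewrite abs1. Qed.

Let bound := p%:R ^+ (N + beta p N) : R.

Lemma bound_ge0 : 0 <= bound. Proof. by rewrite exprn_ge0 ?ler0n. Qed.

Lemma coef_bounded_newton_part i : coef_bounded bound (newton_part i).
Proof.
apply: coef_bounded_sum => [|m _]; first exact: bound_ge0.
apply: (@coef_boundedW (abs (divdiff node (node_val i) 0 m) * 1)).
  rewrite mulr1 (le_trans (abs_divdiff_le _ _)) // ler_eXn2l ?ltr1n ?prime_gt1 //.
  by apply/exponent_le_beta/(leq_trans (ltn_ord m)); rewrite ltn_predL.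
apply: coef_boundedZ; apply: coef_bounded_prod => l _; apply: coef_boundedB.
  exact: coef_boundedX.
by apply: coef_boundedC; rewrite ?ler01 // nodeE absX abs_uj expr1n.
Qed.

Lemma norm1_t_le : norm1 abs t <= bound.
Proof.
apply: norm1_le; first exact: bound_ge0.
rewrite t_eq_interp; apply: coef_bounded_comp; [exact: bound_ge0 | | exact: coef_bounded_Z].
apply: coef_bounded_sum => [|i _]; first exact: bound_ge0.
rewrite -[bound]mul1r; apply: coef_boundedM; rewrite ?ler01 ?bound_ge0 //.
  exact/coef_boundedXn/coef_boundedX.
apply: coef_bounded_comp; first exact: bound_ge0.
  exact: coef_bounded_newton_part.
exact/coef_boundedXn/coef_boundedX.
Qed.

(* Only the [i = p - 1] part reaches the top degree [q (p - 1) + P (N - 1)], with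
   the leading coefficient of its Newton interpolant. *)
Lemma coef_interp_y_top :
  interp_y`_(q * p.-1 + P * N.-1) = divdiff node (node_val p.-1) 0 N.-1.
Proof.
have pp : (p.-1 < p)%N by rewrite ltn_predL prime_gt0.
rewrite coef_sum (bigD1 (Ordinal pp)) //= big1 ?addr0 => [|i ip].
  rewrite coefXnM ltnNge leq_addr /= addKn coef_comp_poly_Xn ?P_gt0 //.
  by rewrite dvdn_mulr // mulKn ?P_gt0 // coef_newton_poly.
apply: nth_default; apply: leq_trans (size_interp_part i) _.
have ip' : (i < p.-1)%N.
  have : (i : nat) != p.-1 by apply: contra_neq ip => ip; apply: val_inj.
  by have := ltn_ord i; move: (nat_of_ord i) => j; lia.
by rewrite ltn_add2r ltn_mul2l q_gt0.
Qed.

Lemma norm1_t_ge : p%:R ^+ N <= norm1 abs t.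
Proof.
have : coef_bounded (norm1 abs t) (t \Po ('X - 1)).
  apply: coef_bounded_comp (norm1_ge0 t) (coef_bounded_norm1 t) _.
  by rewrite -polyCN; apply: coef_bounded_XaddC; rewrite absN abs1.
have -> : t \Po ('X - 1) = interp_y.
  by rewrite t_eq_interp -comp_polyA rmorphD /= comp_polyX comp_polyC subrK comp_polyXr.
move=> /(_ (q * p.-1 + P * N.-1)%N); rewrite coef_interp_y_top abs_divdiff_last prednK //.
by apply: le_trans; rewrite ler_eXn2l ?ltr1n ?prime_gt1 ?leq_addr.
Qed.

Lemma coef_bounded_xi_tw k : coef_bounded 1 (xi_tw k).
Proof.
rewrite /xi_tw twist_xi; apply: coef_bounded_sum => [|i _]; first exact: ler01.
apply/coef_boundedXn/coef_boundedXn.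
apply: (@coef_boundedW (abs (uj k)^-1 * 1)); first by rewrite absV abs_uj invr1 mulr1.
exact/coef_boundedZ/coef_bounded_Z.
Qed.

Lemma abs_lead_coef_xi_tw k : abs (lead_coef (xi_tw k)) = 1.
Proof.
have := congr1 (abs \o lead_coef) (twist_omega_split k).
rewrite /= lead_coefM absM !lead_coef_twist_omega !absX absV abs_uj invr1 !expr1n.
by rewrite mul1r => <-.
Qed.

Lemma xi_prod_cofactor : xi_prod * r = p%:R ^+ N *: t.
Proof.
rewrite [in RHS]t_eq_mul ell_xi_prod -scalerAr scalerA mulfV ?scale1r 1?mulrC //.
by rewrite expf_neq0 ?natp_neq0.
Qed.

Lemma coef_bounded_cofactor : beta p N = 0%N -> coef_bounded 1 r.
Proof.
move=> beta0; apply: (@coef_bounded1_divp xi_prod).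
- by apply: coef_bounded_prod => k _; apply: coef_bounded_xi_tw.
- by rewrite lead_coef_prod abs_prod big1 // => k _; apply: abs_lead_coef_xi_tw.
rewrite xi_prod_cofactor => i; rewrite coefZ absM absX absp.
have := le_trans (coef_bounded_norm1 t i) norm1_t_le; rewrite /bound beta0 addn0.
by rewrite exprVn mulrC ler_pdivrMr ?exprn_gt0 ?ltr0n ?prime_gt0 // mul1r.
Qed.

Let x0 := uj 0 - 1.

Lemma horner_t_x0 : t.[x0] = 1.
Proof.
have /(root_dvdp (omega_prev_dvd_t1 N_gt0)) : root (twist u (a + 0%:Z) (omega K p n.-1)) x0.
  by rewrite /root twist_omega !hornerE /x0 subrK mulVf ?uj_neq0 // expr1n subrr.
by rewrite /root !hornerE subr_eq0 => /eqP.
Qed.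

Lemma abs_horner_ell_x0 : abs ell.[x0] = 1.
Proof.
rewrite ellE horner_prod abs_prod big1 // => k _.
rewrite hornerZ absM absV absp invrK /xi_tw twist_xi horner_sum.
have Yx0 : (Y k).[x0] = (u^-1 ^+ k) ^+ q.
  rewrite /Y horner_exp hornerZ !hornerE /x0 subrK !ujE expr0 mulr1 invfM -mulrA.
  by rewrite mulrCA mulVf ?ua_neq0 // mulr1 exprVn.
under eq_bigr => i _ do rewrite horner_exp Yx0.
rewrite abs_sum_expr_p ?mulfV ?pnatr_eq0 -?lt0n ?prime_gt0 //.
by rewrite -exprM (le_trans (abs_expr_sub1_le uV_near1 _)) ?uV_near1.
Qed.

Lemma abs_cofactor_coef0 : beta p N = 0%N -> abs r`_0 = 1.
Proof.
move=> beta0; apply: (abs_coef0_of_horner (x := x0)); first exact: coef_bounded_cofactor.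
  exact: le_lt_trans (uj_near1 0) invp_lt1.
have := congr1 abs horner_t_x0; rewrite {1}t_eq_mul hornerM absM abs_horner_ell_x0.
by rewrite mulr1 abs1.
Qed.

Lemma ps_Zp_unit_cofactor : beta p N = 0%N ->
  exists g : nat -> K, ps_Zp_unit abs g /\ ps_of_poly t = psmul g (ps_of_poly ell).
Proof.
move=> beta0; exists (ps_of_poly r); split.
  by apply: ps_Zp_unit_poly; [exact: coef_bounded_cofactor | exact: abs_cofactor_coef0].
by apply: boolp.funext => k; rewrite /ps_of_poly /psmul {1}t_eq_mul coefM.
Qed.

Lemma interpolant_spec : let J := Zinterval a N in
  [/\ exists Rp : {poly K},
        is_inv_mod (ellS p u n J) (omegaS p u n.-1 J) Rp /\ t = Rp * ellS p u n J,
      (omegaS p u n J %/ omegaS p u n.-1 J) %| t,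
      omegaS p u n.-1 J %| (t - 1),
      (p%:R ^+ N <= norm1 abs t /\ norm1 abs t <= p%:R ^+ (N + beta p N))
    & (beta p N = 0%N ->
        exists g : nat -> K, ps_Zp_unit abs g /\
          ps_of_poly t = psmul g (ps_of_poly (ellS p u n J)))].
Proof.
have [inv_mod quot_dvd dvd_t1] := interpolant_divisibility.
by split=> //; [split; [exact: norm1_t_ge | exact: norm1_t_le] | exact: ps_Zp_unit_cofactor].
Qed.

End Interpolant.
End NonArchimedean.

Theorem mainTheorem1
  (p : nat) (hp : prime p) (hodd : odd p)
  (K : fieldType) (R : realType) (abs : K -> R) (hK : is_Qp p abs)
  (u : K) (hu : abs (u - 1) <= abs (p%:R)) (hu1 : u != 1)
  (a : int) (N : nat) (hN : (1 <= N)%N)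
  (n : nat) (hn : (1 <= n)%N)
  (t : {poly K})
  (ht_deg : (size t <= p ^ n * N)%N)
  (ht_cong : forall j, j \in Zinterval a N ->
      twist u j (omega K p n) %| (t - (p%:R)^-1 *: twist u j (xi K p n))) :
  let J := Zinterval a N in
  [/\ exists Rp : {poly K},
        is_inv_mod (ellS p u n J) (omegaS p u n.-1 J) Rp /\
        t = Rp * ellS p u n J,
      (omegaS p u n J %/ omegaS p u n.-1 J) %| t,
      omegaS p u n.-1 J %| (t - 1),
      (p%:R ^+ N <= norm1 abs t /\ norm1 abs t <= p%:R ^+ (N + beta p N))
    & (beta p N = 0%N ->
        exists g : nat -> K, ps_Zp_unit abs g /\
          ps_of_poly t = psmul g (ps_of_poly (ellS p u n J)))].
Proof.
have [abs0P abs_ge0 absM absD [absp _ _]] := hK.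
rewrite absp in hu.
exact: (interpolant_spec hp hodd abs0P abs_ge0 absM absD absp hu hu1 hN hn ht_deg ht_cong).
Qed.
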